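(* Let $M$ be a duplicial module in a pre-additive category and $n\ge0$. Then $$\kappa_{n+1}s_{n,i}=\begin{cases}0,& i=0,\\ -s_{n,i-1}\kappa_n,& 1\le i\le n,\\ (s_{n,n+1}-s_{n,n})\kappa_n,& i=n+1.\end{cases}$$
   Context: Let $\mathcal A$ be a pre-additive category. Let $\Lambda_+$ be the category with objects $[n]$, $n\ge0$, where $\Lambda_+([m],[n])$ is the set of weakly monotone $f:\mathbb Z\to\mathbb Z$ with $f(j+m+1)=f(j)+n+1$ for all $j$ and $f(0)\ge0$. Define $\varepsilon^n_i:[n-1]\to[n]$ ($n\ge1$, $0\le i\le n$) by $\varepsilon^n_i(j)=j$ for $0\le j<i$, $j+1$ for $i\le j\le n-1$, and $\eta^n_i:[n+1]\to[n]$ ($0\le i\le n+1$) by $\eta^n_i(j)=j$ for $0\le j\le i$, $j-1$ for $i<j\le n+1$ (extended periodically). A duplicial module is a functor $M:\Lambda_+^{op}\to\mathcal A$; $M_n=M([n])$, $\partial_{n,i}=M(\varepsilon^n_i):M_n\to M_{n-1}$, $s_{n,i}=M(\eta^n_i):M_n\to M_{n+1}$. Convention $M_{-1}=0$, maps into/out of it zero. The Karoubi operator is $\kappa_n=(-1)^n(\partial_{n+1,0}s_{n,n+1}-s_{n-1,n}\partial_{n,0}):M_n\to M_n$ (so $\kappa_0=\partial_{1,0}s_{0,1}$). *)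

From HB Require Import structures.
From mathcomp Require Import all_boot all_order all_algebra.
Set Implicit Arguments. Unset Strict Implicit. Unset Printing Implicit Defensive.
Import Order.TTheory GRing.Theory Num.Theory.
Local Open Scope ring_scope.

Record preadditive := Preadditive {
  Obj : Type;
  Hom : Obj -> Obj -> zmodType;
  pacomp : forall a b c : Obj, Hom b c -> Hom a b -> Hom a c;
  idm : forall a : Obj, Hom a a;
  pacompA : forall a b c d (h : Hom c d) (g : Hom b c) (f : Hom a b),
      pacomp h (pacomp g f) = pacomp (pacomp h g) f;
  comp1f : forall a b (f : Hom a b), pacomp (idm b) f = f;
  compf1 : forall a b (f : Hom a b), pacomp f (idm a) = f;
  compDl : forall a b c (g1 g2 : Hom b c) (f : Hom a b),
      pacomp (g1 + g2) f = pacomp g1 f + pacomp g2 f;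
  compDr : forall a b c (g : Hom b c) (f1 f2 : Hom a b),
      pacomp g (f1 + f2) = pacomp g f1 + pacomp g f2
}.
Arguments pacomp {p a b c}.
Arguments idm {p a}.

(* f : Z -> Z is a morphism [m] -> [n] of Lambda_+ *)
Definition isLam (m n : nat) (f : int -> int) : Prop :=
  (forall j k : int, j <= k -> f j <= f k) /\
  (forall j : int, f (j + (m.+1)%:Z) = f j + (n.+1)%:Z) /\
  0 <= f 0.

(* epsilon^n_i : [n-1] -> [n]  (n >= 1), extended periodically *)
Definition eps (n i : nat) : int -> int := fun j =>
  let q := (j %/ n%:Z)%Z in let r := (j %% n%:Z)%Z in
  q * (n.+1)%:Z + (if r < i%:Z then r else r + 1).

(* eta^n_i : [n+1] -> [n], extended periodically *)
Definition eta (n i : nat) : int -> int := fun j =>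
  let q := (j %/ (n.+2)%:Z)%Z in let r := (j %% (n.+2)%:Z)%Z in
  q * (n.+1)%:Z + (if r <= i%:Z then r else r - 1).

(* A duplicial module: a (contravariant) functor Lambda_+^op -> A.
   [Mmor m n f] is M(f) : M_n -> M_m for f : [m] -> [n] in Lambda_+
   (its value on functions that are not morphisms is irrelevant). *)
Record duplicial (A : preadditive) := Duplicial {
  Mob : nat -> Obj A;
  Mmor : forall m n : nat, (int -> int) -> Hom (Mob n) (Mob m);
  Mext : forall m n f g, isLam m n f -> isLam m n g -> f =1 g ->
      Mmor m n f = Mmor m n g;
  Mid : forall n, Mmor n n id = idm;
  Mcomp : forall l m n f g, isLam m n f -> isLam l m g ->
      Mmor l n (f \o g) = pacomp (Mmor l m g) (Mmor m n f)
}.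

Section Ops.
Variables (A : preadditive) (M : duplicial A).
(* face maps: d n i = partial_{n+1,i} : M_{n+1} -> M_n *)
Definition face (n i : nat) : Hom (Mob M n.+1) (Mob M n) :=
  Mmor M n n.+1 (eps n.+1 i).
Definition degen (n i : nat) : Hom (Mob M n) (Mob M n.+1) :=
  Mmor M n.+1 n (eta n i).
(* Karoubi operator, with the convention M_{-1} = 0 *)
Definition kappa (n : nat) : Hom (Mob M n) (Mob M n) :=
  match n with
  | 0 => pacomp (face 0 0) (degen 0 1)
  | k.+1 => (pacomp (face k.+1 0) (degen k.+1 k.+2)
             - pacomp (degen k k.+1) (face k 0)) *~ ((-1) ^+ k.+1)
  end.
End Ops.

From HB Require Import structures.
From Pilot Require Import Defs.
From mathcomp Require Import all_boot all_order all_algebra zify.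
Import Order.TTheory GRing.Theory Num.Theory.
Local Open Scope ring_scope.

(* The three cases follow from the definition of the Karoubi operator by
   bilinearity of composition and three simplicial identities in Lambda_+:
     s_{m+1,j} s_{m,i} = s_{m+1,i} s_{m,j-1}        (i < j <= m+2),
     d_{m+1,0} s_{m,0} = 1,
     d_{k+2,0} s_{k+1,i} = s_{k,i-1} d_{k+1,0}      (1 <= i <= k+1).
   Each holds in M because the corresponding composites of the maps eta and
   epsilon agree as functions Z -> Z; since these maps are periodic, it is
   enough to compare them on one period, where they are explicit. *)

Lemma divz_modz_small (p q r : int) : 0 < p -> 0 <= r < p ->
  ((q * p + r) %/ p)%Z = q /\ ((q * p + r) %% p)%Z = r.
Proof.
move=> p_gt0 /andP[r_ge0 r_ltp]; have p_neq0 : p != 0 by rewrite gt_eqF.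
split; first by rewrite divzMDl // divz_small ?addr0 // r_ge0 /= abszE gtr0_norm.
by rewrite modzMDl modz_small // r_ge0 r_ltp.
Qed.

Lemma int_ind_divmod (p : nat) (P : int -> Prop) : (0 < p)%N ->
  (forall q r, 0 <= r < p%:Z -> P (q * p%:Z + r)) -> forall j, P j.
Proof.
move=> p_gt0 HP j; rewrite (divz_eq j p); apply: HP.
have p_neq0 : p%:Z != 0 by rewrite eqz_nat -lt0n.
by rewrite modz_ge0 // ltz_pmod // ltz_nat.
Qed.

Lemma int_nondecreasing_step (f : int -> int) : (forall j, f j <= f (j + 1)) ->
  forall j k : int, j <= k -> f j <= f k.
Proof.
move=> f_step j k le_jk.
have -> : k = j + (`|k - j|%N)%:Z by rewrite gez0_abs ?subr_ge0 //; lia.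
elim: `|k - j|%N => [|d IHd]; first by rewrite addr0.
apply: (le_trans IHd); have -> : j + d.+1%:Z = j + d%:Z + 1 by lia.
exact: f_step.
Qed.

Section PeriodicMaps.
Variables (n i : nat).

Lemma eps_val (q r : int) : (0 < n)%N -> 0 <= r < n%:Z ->
  eps n i (q * n%:Z + r) = q * n.+1%:Z + (if r < i%:Z then r else r + 1).
Proof.
move=> n_gt0 r_range; rewrite /eps.
by have [-> ->] := @divz_modz_small _ q _ (n_gt0 : 0 < n%:Z) r_range.
Qed.

Lemma eta_val (q r : int) : 0 <= r < n.+2%:Z ->
  eta n i (q * n.+2%:Z + r) = q * n.+1%:Z + (if r <= i%:Z then r else r - 1).
Proof.
move=> r_range; rewrite /eta.
by have [-> ->] := @divz_modz_small _ q _ (isT : 0 < n.+2%:Z) r_range.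
Qed.

Lemma eps_val2 (q r : int) : (0 < n)%N -> 0 <= r < 2 * n%:Z ->
  eps n i (q * n%:Z + r) =
    if r < n%:Z then q * n.+1%:Z + (if r < i%:Z then r else r + 1)
    else (q + 1) * n.+1%:Z
         + (if r - n%:Z < i%:Z then r - n%:Z else r - n%:Z + 1).
Proof.
move=> n_gt0 r_range; case: ifPn => r_ltn; first by rewrite eps_val //; lia.
have -> : q * n%:Z + r = (q + 1) * n%:Z + (r - n%:Z) by lia.
by rewrite eps_val //; lia.
Qed.

Lemma eta_val2 (q r : int) : 0 <= r < 2 * n.+2%:Z ->
  eta n i (q * n.+2%:Z + r) =
    if r < n.+2%:Z then q * n.+1%:Z + (if r <= i%:Z then r else r - 1)
    else (q + 1) * n.+1%:Z
         + (if r - n.+2%:Z <= i%:Z then r - n.+2%:Z else r - n.+2%:Z - 1).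
Proof.
move=> r_range; case: ifPn => r_lt; first by rewrite eta_val //; lia.
have -> : q * n.+2%:Z + r = (q + 1) * n.+2%:Z + (r - n.+2%:Z) by lia.
by rewrite eta_val //; lia.
Qed.

End PeriodicMaps.

Ltac case_ifs := repeat (case: ifPn => ?); try lia.

Lemma eta_eta {m i j : nat} : (i < j <= m.+2)%N ->
  eta m i \o eta m.+1 j =1 eta m j.-1 \o eta m.+1 i.
Proof.
move=> lt_ij; apply: (@int_ind_divmod m.+3) => // q r r_range /=.
rewrite (eta_val m.+1 j q) // (eta_val m.+1 i q) //.
by case_ifs; rewrite !eta_val2; try lia; case_ifs.
Qed.

Lemma eta0_eps0 (m : nat) : eta m 0 \o eps m.+1 0 =1 id.
Proof.
apply: (@int_ind_divmod m.+1) => // q r r_range /=.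
by rewrite eps_val //; case_ifs; rewrite eta_val; last lia; case_ifs.
Qed.

Lemma eta_eps0 {k i : nat} : (1 <= i <= k.+1)%N ->
  eta k.+1 i \o eps k.+2 0 =1 eps k.+1 0 \o eta k i.-1.
Proof.
move=> i_range; apply: (@int_ind_divmod k.+2) => // q r r_range /=.
rewrite (eps_val k.+2 0 q) // (eta_val k i.-1 q) //.
by case_ifs; rewrite ?eta_val2 ?eps_val2; try lia; case_ifs.
Qed.

Lemma isLam_id (n : nat) : isLam n n id.
Proof. by split; [|split]. Qed.

Lemma isLam_comp {l m n : nat} {f g : int -> int} :
  isLam m n f -> isLam l m g -> isLam l n (f \o g).
Proof.
move=> [f_mono [f_per f0]] [g_mono [g_per g0]]; split; last split.
- by move=> j k le_jk; apply/f_mono/g_mono.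
- by move=> j /=; rewrite g_per f_per.
- exact: le_trans f0 (f_mono _ _ g0).
Qed.

Lemma isLam_eps (k i : nat) : isLam k k.+1 (eps k.+1 i).
Proof.
split; last split.
- apply: int_nondecreasing_step; apply: (@int_ind_divmod k.+1) => // q r r_range.
  by rewrite -addrA eps_val // eps_val2; try lia; case_ifs.
- apply: (@int_ind_divmod k.+1) => // q r r_range.
  have -> : q * k.+1%:Z + r + k.+1%:Z = (q + 1) * k.+1%:Z + r by lia.
  by rewrite !eps_val //; case_ifs.
- by rewrite (_ : 0 = 0 * k.+1%:Z + 0) // eps_val //; case_ifs.
Qed.

Lemma isLam_eta (k i : nat) : isLam k.+1 k (eta k i).
Proof.
split; last split.
- apply: int_nondecreasing_step; apply: (@int_ind_divmod k.+2) => // q r r_range.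
  by rewrite -addrA eta_val // eta_val2; try lia; case_ifs.
- apply: (@int_ind_divmod k.+2) => // q r r_range.
  have -> : q * k.+2%:Z + r + k.+2%:Z = (q + 1) * k.+2%:Z + r by lia.
  by rewrite !eta_val //; case_ifs.
- by rewrite (_ : 0 = 0 * k.+2%:Z + 0) // eta_val //; case_ifs.
Qed.

Section Bilinearity.
Variables (A : preadditive) (a b c : Obj A).

(* Naming the one-sided composition maps makes them additive morphisms, so
   the [raddf*] lemmas of ssralg apply to composition. *)
Definition precomp (f : Defs.Hom a b) (g : Defs.Hom b c) := pacomp g f.
Definition postcomp (g : Defs.Hom b c) (f : Defs.Hom a b) := pacomp g f.

Lemma precomp_is_nmod_morphism f : nmod_morphism (precomp f).
Proof.
have precompD : {morph precomp f : x y / x + y} by move=> x y; apply: compDl.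
by split=> //; apply: (@addrI _ (precomp f 0)); rewrite -precompD !addr0.
Qed.

Lemma postcomp_is_nmod_morphism g : nmod_morphism (postcomp g).
Proof.
have postcompD : {morph postcomp g : x y / x + y} by move=> x y; apply: compDr.
by split=> //; apply: (@addrI _ (postcomp g 0)); rewrite -postcompD !addr0.
Qed.

HB.instance Definition _ f :=
  GRing.isNmodMorphism.Build _ _ (precomp f) (precomp_is_nmod_morphism f).
HB.instance Definition _ g :=
  GRing.isNmodMorphism.Build _ _ (postcomp g) (postcomp_is_nmod_morphism g).

Lemma compNl (g : Defs.Hom b c) (f : Defs.Hom a b) :
  pacomp (- g) f = - pacomp g f.
Proof. exact: (raddfN (precomp f)). Qed.

Lemma compBl (g1 g2 : Defs.Hom b c) (f : Defs.Hom a b) :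
  pacomp (g1 - g2) f = pacomp g1 f - pacomp g2 f.
Proof. exact: (raddfB (precomp f)). Qed.

Lemma compBr (g : Defs.Hom b c) (f1 f2 : Defs.Hom a b) :
  pacomp g (f1 - f2) = pacomp g f1 - pacomp g f2.
Proof. exact: (raddfB (postcomp g)). Qed.

Lemma compMzl (g : Defs.Hom b c) (f : Defs.Hom a b) (z : int) :
  pacomp (g *~ z) f = pacomp g f *~ z.
Proof. exact: (raddfMz (precomp f)). Qed.

Lemma compMzr (g : Defs.Hom b c) (f : Defs.Hom a b) (z : int) :
  pacomp g (f *~ z) = pacomp g f *~ z.
Proof. exact: (raddfMz (postcomp g)). Qed.

End Bilinearity.

Section Simplicial.
Variables (A : preadditive) (M : duplicial A).

Lemma Mmor_comp_ext {l m m' n : nat} {f g f' g' : int -> int} :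
  isLam m n f -> isLam l m g -> isLam m' n f' -> isLam l m' g' ->
  f \o g =1 f' \o g' ->
  pacomp (Mmor M l m g) (Mmor M m n f) = pacomp (Mmor M l m' g') (Mmor M m' n f').
Proof.
move=> f_lam g_lam f'_lam g'_lam eq_fg.
rewrite -(Mcomp M f_lam g_lam) -(Mcomp M f'_lam g'_lam).
apply: (Mext M) eq_fg; [exact: isLam_comp f_lam g_lam|exact: isLam_comp f'_lam g'_lam].
Qed.

Lemma degen_degen (m i j : nat) : (i < j <= m.+2)%N ->
  pacomp (degen M m.+1 j) (degen M m i) = pacomp (degen M m.+1 i) (degen M m j.-1).
Proof. by move=> lt_ij; apply: Mmor_comp_ext (eta_eta lt_ij); apply: isLam_eta. Qed.

Lemma face0_degen0 (m : nat) : pacomp (face M m 0) (degen M m 0) = idm.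
Proof.
rewrite -(Mid M m) -[Mmor M m m id]comp1f -(Mid M m).
by apply: Mmor_comp_ext (eta0_eps0 m); [apply: isLam_eta|apply: isLam_eps|apply: isLam_id..].
Qed.

Lemma face0_degen (k i : nat) : (1 <= i <= k.+1)%N ->
  pacomp (face M k.+1 0) (degen M k.+1 i) = pacomp (degen M k i.-1) (face M k 0).
Proof.
move=> i_range; apply: Mmor_comp_ext (eta_eps0 i_range);
  first [apply: isLam_eps|apply: isLam_eta].
Qed.

Lemma kappa_degen0 (n : nat) : pacomp (kappa M n.+1) (degen M n 0) = 0.
Proof.
rewrite /kappa compMzl compBl -!pacompA (degen_degen n 0 n.+2); last lia.
by rewrite pacompA !face0_degen0 comp1f compf1 subrr mul0rz.
Qed.

Lemma kappa_degen (k i : nat) : (1 <= i <= k.+1)%N ->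
  pacomp (kappa M k.+2) (degen M k.+1 i)
  = - pacomp (degen M k.+1 i.-1) (kappa M k.+1).
Proof.
move=> i_range.
have face_top : pacomp (face M k.+2 0) (pacomp (degen M k.+2 k.+3) (degen M k.+1 i))
    = pacomp (degen M k.+1 i.-1) (pacomp (face M k.+1 0) (degen M k.+1 k.+2)).
  rewrite (degen_degen k.+1 i k.+3); last lia.
  by rewrite pacompA (face0_degen k.+1 i) 1?pacompA //; lia.
have degen_top : pacomp (degen M k.+1 k.+2) (pacomp (face M k.+1 0) (degen M k.+1 i))
    = pacomp (degen M k.+1 i.-1) (pacomp (degen M k k.+1) (face M k 0)).
  rewrite (face0_degen k i) // pacompA (degen_degen k i.-1 k.+2); last lia.
  by rewrite pacompA.
rewrite /kappa compMzl compBl -!pacompA face_top degen_top compMzr compBr.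
by rewrite exprS mulN1r mulrNz.
Qed.

Lemma kappa_degen_last (n : nat) :
  pacomp (kappa M n.+1) (degen M n n.+1)
  = pacomp (degen M n n.+1 - degen M n n) (kappa M n).
Proof.
have face_top : pacomp (face M n.+1 0) (pacomp (degen M n.+1 n.+2) (degen M n n.+1))
    = pacomp (degen M n n) (pacomp (face M n 0) (degen M n n.+1)).
  rewrite (degen_degen n n.+1 n.+2); last lia.
  by rewrite pacompA (face0_degen n n.+1) 1?pacompA //; lia.
rewrite [kappa M n.+1]/kappa compMzl compBl -!pacompA face_top -compBl.
case: n {face_top} => [|k]; first by rewrite /kappa expr1 mulrN1z -compNl opprB.
have degen_kills : pacomp (degen M k.+1 k.+2 - degen M k.+1 k.+1)
    (pacomp (degen M k k.+1) (face M k 0)) = 0.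
  by rewrite compBl !pacompA (degen_degen k k.+1 k.+2) ?subrr //; lia.
rewrite [kappa M k.+1]/kappa compMzr compBr degen_kills subr0.
by rewrite exprS mulN1r mulrNz -mulNrz -compNl opprB.
Qed.

End Simplicial.

Theorem mainTheorem11 (A : preadditive) (M : duplicial A) (n : nat) :
  pacomp (kappa M n.+1) (degen M n 0) = 0 /\
  (forall i : nat, (1 <= i <= n)%N ->
     pacomp (kappa M n.+1) (degen M n i) = - pacomp (degen M n i.-1) (kappa M n)) /\
  pacomp (kappa M n.+1) (degen M n n.+1)
    = pacomp (degen M n n.+1 - degen M n n) (kappa M n).
Proof.
split; first exact: kappa_degen0.
split; last exact: kappa_degen_last.
by case: n => [|k] i i_range; [lia | exact: kappa_degen].
Qed.
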